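(* Let $\theta=\pi/30$, let $$u=(u_1,\dots,u_8)=\Big(2\sin\theta,\ 2\sin 2\theta,\ 2\sin 3\theta,\ 2\sin 4\theta,\ 2\sin 5\theta,\ \frac{\sin 2\theta}{\sin 3\theta},\ \frac{\sin\theta}{\sin 3\theta},\ \frac{\sin\theta}{\sin 2\theta}\Big),$$ and let $M=2\sqrt3\,\dfrac{\sin 6\theta}{\sin\theta}$. Let $$P_1(x)=x^4-30x^3+240x^2-720x+720,\qquad P_2(x)=x^4-30x^3+300x^2-1080x+720 .$$ Then the roots of $P_1$ are $M u_j^2$ for $j\in\{2,5,7,8\}$ and the roots of $P_2$ are $M u_j^2$ for $j\in\{1,3,4,6\}$. Consequently the eight roots of $P=P_1P_2=x^8-60x^7+1440x^6-18000x^5+127440x^4-518400x^3+1166400x^2-1296000x+518400$ are exactly $M u_j^2$, $j=1,\dots,8$.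
   Context: In the application, $P$ is the characteristic polynomial of the mass-squared matrix $B_{ab}=\sum_{j=0}^{8} n_j\alpha_j^a\alpha_j^b$ of the $E_8$ affine Toda field theory (with $n_0=1$, $\alpha_0=-\delta$ minus the highest root, and $n_j$ the coefficients of the highest root), so the roots $M u_j^2$ are the squared masses $m_j^2$; the vector $u$ is the Perron–Frobenius eigenvector of $2I-C$ for the $E_8$ Cartan matrix $C$ (simple roots $\alpha_1,\dots,\alpha_7$ in a chain, $\alpha_8$ attached to $\alpha_5$). *)

From HB Require Import structures.
From mathcomp Require Import all_boot all_order all_algebra.
From mathcomp Require Import all_classical all_reals all_analysis.
Set Implicit Arguments. Unset Strict Implicit. Unset Printing Implicit Defensive.
Import Order.TTheory GRing.Theory Num.Theory.
Local Open Scope ring_scope.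

Section E8.
Variable R : realType.

Definition theta : R := pi / 30.

(* u_j for j = 1..8 (index 0 and >8 are junk, set to 0) *)
Definition u (j : nat) : R :=
  match j with
  | 1 => 2 * sin theta
  | 2 => 2 * sin (2 * theta)
  | 3 => 2 * sin (3 * theta)
  | 4 => 2 * sin (4 * theta)
  | 5 => 2 * sin (5 * theta)
  | 6 => sin (2 * theta) / sin (3 * theta)
  | 7 => sin theta / sin (3 * theta)
  | 8 => sin theta / sin (2 * theta)
  | _ => 0
  end.

Definition Mconst : R := 2 * Num.sqrt 3 * (sin (6 * theta) / sin theta).

Definition P1 : {poly R} :=
  'X^4 - 30%:P * 'X^3 + 240%:P * 'X^2 - 720%:P * 'X + 720%:P.
Definition P2 : {poly R} :=
  'X^4 - 30%:P * 'X^3 + 300%:P * 'X^2 - 1080%:P * 'X + 720%:P.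
(* Large numerals overflow the stack in MathComp's unary elaboration, so the
   coefficients 18000, 127440, 518400, 1166400, 1296000 are written as products
   of smaller numerals in R. *)
Definition P8 : {poly R} :=
  'X^8 - 60%:P * 'X^7 + 1440%:P * 'X^6 - (120 * 150)%:P * 'X^5
  + (360 * 354)%:P * 'X^4 - (720 * 720)%:P * 'X^3 + (1080 * 1080)%:P * 'X^2
  - (1080 * 1200)%:P * 'X + (720 * 720)%:P.

End E8.

From mathcomp Require Import all_boot all_order all_algebra.
From mathcomp Require Import all_classical all_reals all_analysis.
From mathcomp Require Import ring lra.
Set Implicit Arguments. Unset Strict Implicit. Unset Printing Implicit Defensive.
Import Order.TTheory GRing.Theory Num.Theory.
Local Open Scope ring_scope.

(* Put x = 2 cos θ with θ = π/30 and y = x^2. Chebyshev expansions express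
   sin (kθ) / sin θ, √3 = 2 cos 5θ, hence M and every M u_j^2, as rational
   functions of x, in fact of y. The relation 2 cos 10θ = 1 factors as
   (y - 3) q(y) = 0 with q = Y^4 - 7Y^3 + 14Y^2 - 8Y + 1, and y > 3, so q(y) = 0.
   Modulo q each M u_j^2 becomes a cubic in y, and the elementary symmetric
   functions of the cubics for j in {2,5,7,8} and {1,3,4,6} reduce to the
   coefficients of P1 and P2. *)

(* [chebS n x = U_n (x / 2)] and [chebC n x = 2 T_n (x / 2)], the normalized
   Chebyshev polynomials S_n and C_n of Abramowitz-Stegun 22.5. *)
Fixpoint chebS {R : pzRingType} (n : nat) (x : R) : R :=
  if n is n'.+1 then (if n' is m.+1 then x * chebS n' x - chebS m x else x) else 1.

Fixpoint chebC {R : pzRingType} (n : nat) (x : R) : R :=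
  if n is n'.+1 then (if n' is m.+1 then x * chebC n' x - chebC m x else x) else 2.

Lemma chebS_SS {R : pzRingType} n (x : R) :
  chebS n.+2 x = x * chebS n.+1 x - chebS n x.
Proof. by []. Qed.

Lemma chebC_SS {R : pzRingType} n (x : R) :
  chebC n.+2 x = x * chebC n.+1 x - chebC n x.
Proof. by []. Qed.

Section ChebyshevTrig.
Variable R : realType.
Implicit Types t : R.

Lemma sin_mulrSS t n :
  sin (t *+ n.+2) = 2 * cos t * sin (t *+ n.+1) - sin (t *+ n).
Proof.
(* [ring: h] normalizes modulo [h], read as a rewrite rule for its left-hand monomial. *)
by rewrite !(mulrS t) !(sinD, cosD); ring: (sin2cos2 t).
Qed.

Lemma cos_mulrSS t n :
  cos (t *+ n.+2) = 2 * cos t * cos (t *+ n.+1) - cos (t *+ n).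
Proof. by rewrite !(mulrS t) !(sinD, cosD); ring: (sin2cos2 t). Qed.

Lemma sin_chebS t n : sin (t *+ n.+1) = sin t * chebS n (2 * cos t).
Proof.
suff [] : sin (t *+ n.+1) = sin t * chebS n (2 * cos t) /\
          sin (t *+ n.+2) = sin t * chebS n.+1 (2 * cos t) by [].
elim: n => [|n [IHn IHSn]].
  by split; rewrite ?(sin_mulrSS t 0) ?mulr0n ?mulr1n ?sin0 /=; ring.
by split=> //; rewrite sin_mulrSS chebS_SS IHn IHSn; ring.
Qed.

Lemma cos_chebC t n : 2 * cos (t *+ n) = chebC n (2 * cos t).
Proof.
suff [] : 2 * cos (t *+ n) = chebC n (2 * cos t) /\
          2 * cos (t *+ n.+1) = chebC n.+1 (2 * cos t) by [].
elim: n => [|n [IHn IHSn]]; first by rewrite mulr0n cos0 mulr1.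
by split=> //; rewrite cos_mulrSS chebC_SS -IHn -IHSn; ring.
Qed.

Lemma cos_pi3 : 2 * cos (pi / 3) = 1 :> R.
Proof.
set z : R := 2 * cos (pi / 3).
have z_gt0 : 0 < z.
  by rewrite mulr_gt0 // cos_gt0_pihalf //; have := pi_gt0 R; lra.
have pi3_3 : pi / 3 *+ 3 = pi :> R by rewrite -mulr_natr; field.
have : chebC 3 z = - 2 by rewrite -cos_chebC pi3_3 cospi mulrN1.
have -> : chebC 3 z = (z - 1) ^+ 2 * (z + 2) - 2 by rewrite /=; ring.
move/eqP; rewrite subr_eq addNr mulf_eq0 sqrf_eq0 subr_eq0 => /orP[/eqP //|].
by rewrite gt_eqF // addr_gt0.
Qed.

Lemma cos_pi6 : 2 * cos (pi / 6) = Num.sqrt 3 :> R.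
Proof.
have z_ge0 : 0 <= 2 * cos (pi / 6) :> R.
  by rewrite mulr_ge0 // cos_ge0_pihalf //; have := pi_gt0 R; lra.
have : chebC 2 (2 * cos (pi / 6)) = 1 :> R.
  have pi6_2 : pi / 6 *+ 2 = pi / 3 :> R by rewrite -mulr_natr; field.
  by rewrite -cos_chebC pi6_2 cos_pi3.
rewrite /= => h.
have -> : 3 = (2 * cos (pi / 6)) ^+ 2 :> R by rewrite expr2; lra.
by rewrite sqrtr_sqr ger0_norm.
Qed.

End ChebyshevTrig.

(* M u_j^2 written as a cubic in y = 4 cos^2 (π/30), i.e. reduced modulo q. *)
Definition e8_mass2 {R : pzRingType} (y : R) (j : nat) : R :=
  match j with
  | 1 => 16 - 20 * y + 12 * y ^+ 2 - 2 * y ^+ 3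
  | 2 => 2 + 8 * y ^+ 2 - 2 * y ^+ 3
  | 3 => 14 - 34 * y + 24 * y ^+ 2 - 4 * y ^+ 3
  | 4 => 6 + 10 * y - 10 * y ^+ 2 + 2 * y ^+ 3
  | 5 => 4 - 4 * y + 2 * y ^+ 2
  | 6 => - 6 + 44 * y - 26 * y ^+ 2 + 4 * y ^+ 3
  | 7 => - 4 + 58 * y - 38 * y ^+ 2 + 6 * y ^+ 3
  | 8 => 28 - 54 * y + 28 * y ^+ 2 - 4 * y ^+ 3
  | _ => 0
  end.

Section E8Masses.
Variable R : realType.
Local Notation θ := (theta R).
Local Notation x := (2 * cos (theta R)).

Lemma sin_theta_gt0 : 0 < sin θ.
Proof. by apply: sin_gt0_pi; rewrite /theta; have := pi_gt0 R; lra. Qed.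

Lemma sqr2cos_theta_gt3 : 3 < x ^+ 2.
Proof.
have pi_gt0 := pi_gt0 R.
have theta2 : θ *+ 2 = pi / 15 by rewrite /theta -mulr_natr; field.
have : 2 * cos (pi / 15) = x ^+ 2 - 2 by rewrite -theta2 cos_chebC /=; ring.
have : cos (pi / 3) < cos (pi / 15) :> R.
  by rewrite ltr_cos ?in_itv /=; [lra | apply/andP; split; lra..].
have := cos_pi3 R; lra.
Qed.

Lemma sqr2cos_theta_minpoly :
  (x ^+ 2) ^+ 4 = 7 * (x ^+ 2) ^+ 3 - 14 * (x ^+ 2) ^+ 2 + 8 * x ^+ 2 - 1.
Proof.
have theta10 : θ *+ 10 = pi / 3 by rewrite /theta -mulr_natr; field.
have C10 : chebC 10 x = 1 by rewrite -cos_chebC theta10 cos_pi3.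
have x2B3_neq0 : x ^+ 2 - 3 != 0 by rewrite subr_eq0 gt_eqF // sqr2cos_theta_gt3.
apply/eqP; rewrite -subr_eq0 -(mulrI_eq0 _ (mulfI x2B3_neq0)); apply/eqP.
transitivity (chebC 10 x - 1); first by rewrite /=; ring.
by rewrite C10 subrr.
Qed.

Lemma Mconst_cheb : Mconst R = 2 * chebC 5 x * chebS 5 x.
Proof.
have theta5 : θ *+ 5 = pi / 6 by rewrite /theta -mulr_natr; field.
rewrite /Mconst -cos_pi6 -theta5 cos_chebC [6 * _]mulr_natl sin_chebS.
by field; rewrite gt_eqF // sin_theta_gt0.
Qed.

Lemma u2_chebS k : (k < 5)%N -> u R k.+1 ^+ 2 = (4 - x ^+ 2) * chebS k x ^+ 2.
Proof.
move=> k_lt5; have -> : u R k.+1 = 2 * sin (θ *+ k.+1).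
  by case: k k_lt5 => [|[|[|[|[|]]]]] // _; rewrite /= ?[_ * theta R]mulr_natl.
by rewrite sin_chebS; ring: (sin2cos2 θ).
Qed.

Let chebS2_neq0 : chebS 2 x != 0.
Proof. by rewrite /= subr_eq0 gt_eqF //; have := sqr2cos_theta_gt3; rewrite expr2; lra. Qed.

Let chebS1_neq0 : chebS 1 x != 0.
Proof. by apply: contraTneq sqr2cos_theta_gt3 => /= ->; rewrite expr0n ltr_nat. Qed.

Lemma u_ratios :
  [/\ u R 6 = chebS 1 x / chebS 2 x, u R 7 = (chebS 2 x)^-1
    & u R 8 = (chebS 1 x)^-1].
Proof.
have s_neq0 : sin θ != 0 by rewrite gt_eqF // sin_theta_gt0.
rewrite /u ![_ * theta R]mulr_natl !sin_chebS.
by split; field; rewrite s_neq0 ?chebS2_neq0 ?chebS1_neq0.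
Qed.

Lemma Mconst_u2 j : (0 < j < 9)%N -> Mconst R * u R j ^+ 2 = e8_mass2 (x ^+ 2) j.
Proof.
have [u6 u7 u8] := u_ratios.
rewrite Mconst_cheb.
case: j => [|[|[|[|[|[|[|[|[|//]]]]]]]]] // _; rewrite ?u6 ?u7 ?u8 ?u2_chebS //;
  move: sqr2cos_theta_minpoly chebS1_neq0 chebS2_neq0 => /=;
  move: (2 * cos θ) => z hq z_neq0 S2z_neq0.
1-5: by ring: hq.
all: by field: hq.
Qed.

End E8Masses.

Lemma prod4_XsubC {R : comNzRingType} (a b c d : R) :
  \prod_(z <- [:: a; b; c; d]) ('X - z%:P) =
  'X^4 - (a + b + c + d)%:P * 'X^3
  + (a * b + a * c + a * d + b * c + b * d + c * d)%:P * 'X^2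
  - (a * b * c + a * b * d + a * c * d + b * c * d)%:P * 'X + (a * b * c * d)%:P.
Proof. by rewrite !big_cons big_nil !polyCD !polyCM; ring. Qed.

Section E8Vieta.
Variables (R : realType) (y : R).
Hypothesis y_minpoly : y ^+ 4 = 7 * y ^+ 3 - 14 * y ^+ 2 + 8 * y - 1.

Lemma P1_e8_mass2 : P1 R = \prod_(j <- [:: 2; 5; 7; 8]%N) ('X - (e8_mass2 y j)%:P).
Proof.
rewrite -(big_map (e8_mass2 y) predT (fun z => 'X - z%:P)) prod4_XsubC /P1.
by congr (_ - _%:P * _ + _%:P * _ - _%:P * _ + _%:P); rewrite /=; ring: y_minpoly.
Qed.

Lemma P2_e8_mass2 : P2 R = \prod_(j <- [:: 1; 3; 4; 6]%N) ('X - (e8_mass2 y j)%:P).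
Proof.
rewrite -(big_map (e8_mass2 y) predT (fun z => 'X - z%:P)) prod4_XsubC /P2.
by congr (_ - _%:P * _ + _%:P * _ - _%:P * _ + _%:P); rewrite /=; ring: y_minpoly.
Qed.

End E8Vieta.

Lemma P8_P1P2 (R : realType) : P8 R = P1 R * P2 R.
Proof. by rewrite /P8 /P1 /P2 !polyCM !polyC_natr; ring. Qed.

Theorem mainTheorem3 (R : realType) :
  P1 R = \prod_(j <- [:: 2; 5; 7; 8]%N) ('X - (Mconst R * u R j ^+ 2)%:P) /\
  P2 R = \prod_(j <- [:: 1; 3; 4; 6]%N) ('X - (Mconst R * u R j ^+ 2)%:P) /\
  P8 R = P1 R * P2 R /\
  P8 R = \prod_(1 <= j < 9) ('X - (Mconst R * u R j ^+ 2)%:P).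
Proof.
have P1E : P1 R = \prod_(j <- [:: 2; 5; 7; 8]%N) ('X - (Mconst R * u R j ^+ 2)%:P).
  by rewrite (P1_e8_mass2 (sqr2cos_theta_minpoly R)) !big_cons !big_nil !Mconst_u2.
have P2E : P2 R = \prod_(j <- [:: 1; 3; 4; 6]%N) ('X - (Mconst R * u R j ^+ 2)%:P).
  by rewrite (P2_e8_mass2 (sqr2cos_theta_minpoly R)) !big_cons !big_nil !Mconst_u2.
split=> //; split=> //; split; first exact: P8_P1P2.
by rewrite P8_P1P2 P1E P2E -big_cat; apply: perm_big.
Qed.
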